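(* Consider the differential equation \[ \frac{d}{dt}\left(\frac{\cos x}{1-\dot{x}}\right) = -\sin x, \qquad\text{equivalently}\qquad \frac{\cos x}{(1-\dot{x})^2}\,\ddot{x} - \frac{\sin x}{1-\dot{x}}\,\dot{x} = -\sin x, \] for a real function $x=x(t)$, with initial conditions $x(0)=a$, $\dot{x}(0)=b$, where $a,b\in\mathbb{R}$ satisfy \[ |a|<\pi/2,\qquad b\neq \tfrac12,\qquad b\neq 1,\qquad |a|+|b|>0 . \] Put $c=\dfrac{(2b-1)\cos^2 a}{(1-b)^2}$, $A=\sin 2a$ and $B=2b-1+\cos 2a$. Then the initial value problem has a smooth solution $x:\mathbb{R}\to\mathbb{R}$ given in explicit form. This solution satisfies \[ \tan x(t)=\frac{A\cos t+B\sin t}{2(1-b)+B\cos t-A\sin t} \] wherever the right-hand side is defined, and \[ \dot{x}(t)=\frac12+\frac{2(2b-1)\cos^2 a}{A^2+B^2+4(1-b)(B\cos t-A\sin t)+4(1-b)^2}. \] It satisfies the differential equation at every $t$ with $\cos x(t)\neq 0$ and $\dot{x}(t)\neq 1$. Moreover: 1. The solution $x$ is periodic if and only if $b<\tfrac12$. In that case its orbit in the phase plane (the $(x,\dot{x})$-plane) is a periodic orbit surrounding the origin, symmetric with respect to the $\dot{x}$-axis. 2. Suppose $b>\tfrac12$. Let $\{t_j\}_{j\in\mathbb{Z}}$ be the strictly increasing enumeration of the real roots of the trigonometric equation $B\cos t-A\sin t=2(b-1)$, indexed so that $t_0$ is the smallest positive root. Then: - for every $j\in\mathbb{Z}$, $x(t_j)$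 is an odd integer multiple of $\pi/2$ and $\dot{x}(t_j)=1$; - at each $t_j$, the differential equation and the energy relation \[ (\cos^2 x)\,\frac{2\dot{x}-1}{(1-\dot{x})^2}=c \] hold in the sense of the limit $t\to t_j$; - the orbit in the phase plane oscillates about the line $\dot{x}=1$ within the strip \[ \frac{\sqrt{1+c}}{\sqrt{1+c}+1}\le \dot{x}\le \frac{\sqrt{1+c}}{\sqrt{1+c}-1}, \] and it crosses the line $\dot{x}=1$ exactly at the times $t=t_j$, $j\in\mathbb{Z}$.
   Context: The phase plane is the $(x,\dot{x})$-plane. Points where $\cos x=0$ or $\dot{x}=1$ are singular points of the equation: there the coefficient of $\ddot{x}$ vanishes or becomes unbounded. The constant $c$ is the value of the ''energy'' $(\cos^2 x)(2\dot{x}-1)/(1-\dot{x})^2$ at $t=0$. This energy is conserved along solutions away from the singular points. *)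

From Stdlib Require Import Reals ZArith.
From Coquelicot Require Import Coquelicot.
Open Scope R_scope.

Definition smooth (f : R -> R) : Prop := forall (n : nat) (t : R), ex_derive_n f n t.

Definition periodic (f : R -> R) : Prop :=
  exists T : R, 0 < T /\ forall t : R, f (t + T) = f t.

Definition phase_orbit (x : R -> R) (p : R * R) : Prop :=
  exists t : R, p = (x t, Derive x t).

(* S surrounds the origin: the origin is not on S and lies in a bounded
   component of the complement of S, i.e. every continuous path starting at
   the origin and reaching far enough away meets S. *)
Definition surrounds_origin (S : R * R -> Prop) : Prop :=
  ~ S (0, 0) /\
  exists M : R, forall g1 g2 : R -> R,
    (forall s, 0 <= s <= 1 -> continuous g1 s /\ continuous g2 s) ->
    g1 0 = 0 -> g2 0 = 0 ->
    M <= (g1 1) ^ 2 + (g2 1) ^ 2 ->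
    exists s, 0 <= s <= 1 /\ S (g1 s, g2 s).

Definition symmetric_wrt_vaxis (S : R * R -> Prop) : Prop :=
  forall p q : R, S (p, q) -> S (- p, q).

Definition energy (x : R -> R) (t : R) : R :=
  (cos (x t)) ^ 2 * (2 * Derive x t - 1) / (1 - Derive x t) ^ 2.

Definition ode_lhs (x : R -> R) (t : R) : R :=
  cos (x t) / (1 - Derive x t) ^ 2 * Derive (Derive x) t
  - sin (x t) / (1 - Derive x t) * Derive x t.

Definition root_enumeration (A B b : R) (tj : Z -> R) : Prop :=
  (forall i j : Z, (i < j)%Z -> tj i < tj j) /\
  (forall t : R, B * cos t - A * sin t = 2 * (b - 1) <-> exists j : Z, t = tj j) /\
  0 < tj 0%Z /\
  (forall t : R, B * cos t - A * sin t = 2 * (b - 1) -> 0 < t -> tj 0%Z <= t).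

From Stdlib Require Import Reals ZArith Lra Lia.
From Coquelicot Require Import Coquelicot.
Open Scope R_scope.

(* Put u = B cos t - A sin t and n = A cos t + B sin t, so that (u, n) is (B, A) rotated by
   the angle t, and k = 2 (1 - b), K = 2 (2b - 1) cos^2 a, which satisfy A^2 + B^2 = k^2 + 2K.
   The solution is x = a + int_0^t v with v = 1/2 + K / D, D = (k + u)^2 + n^2
   = 2K + 2k (k + u) > 0, hence 1 - v = k (k + u) / D.  The defect
   q = sin x (k + u) - cos x n satisfies q' = (D' / 2D) q, so q^2 / D is constant, and it
   vanishes because q(0) = 0.  This is the relation tan x = n / (k + u), from which the
   reduced equation cos x x'' = sin x (1 - x') (2x' - 1), the differential equation and
   the conservation of energy follow by algebra.
   For b < 1/2 we have K < 0 < k, so k + u > 0 and x = atan (n / (k + u)) is 2 pi-periodic.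
   In the polar coordinates (rho, x) with rho^2 = D = K / (x' - 1/2) the orbit is the
   curve rho^2 - 2 k rho cos x = 2K; its level function is negative at the origin and
   positive on the boundary of a box around it, so every path leaving the box meets the
   orbit.  For b > 1/2, x' > 1/2, so x is increasing, and x' = 1 exactly at the zeros of
   k + u, which are simple, so that x' - 1 changes sign there. *)

(** * Finite-order differentiability *)

Definition derivable_upto (n : nat) (f : R -> R) : Prop :=
  forall m t, (m <= n)%nat -> ex_derive_n f m t.

Lemma Derive_n_Derive f n t : Derive_n (Derive f) n t = Derive_n f (S n) t.
Proof.
  revert t; induction n as [|n IH]; intro t; [reflexivity|].
  apply Derive_ext; exact IH.
Qed.

Lemma derivable_uptoS n f :
  derivable_upto (S n) f <-> (forall t, ex_derive f t) /\ derivable_upto n (Derive f).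
Proof.
  split.
  - intro H; split; [intro t; exact (H 1%nat t ltac:(lia))|].
    intros [|m] t Hm; [exact I|].
    apply ex_derive_ext with (Derive_n f (S m)).
    + intro; symmetry; apply Derive_n_Derive.
    + exact (H (S (S m)) t ltac:(lia)).
  - intros [Hf HDf] [|[|m]] t Hm; [exact I | exact (Hf t)|].
    apply ex_derive_ext with (Derive_n (Derive f) m).
    + intro; apply Derive_n_Derive.
    + exact (HDf (S m) t ltac:(lia)).
Qed.

Lemma derivable_upto0 f : derivable_upto 0 f.
Proof. intros m t Hm; replace m with 0%nat by lia; exact I. Qed.

Lemma derivable_upto_ext n f g :
  (forall t, f t = g t) -> derivable_upto n f -> derivable_upto n g.
Proof. intros Hfg Hf m t Hm; apply ex_derive_n_ext with f; auto. Qed.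

Lemma derivable_upto_pred n f : derivable_upto (S n) f -> derivable_upto n f.
Proof. intros Hf m t Hm; apply Hf; lia. Qed.

Lemma derivable_upto_const n c : derivable_upto n (fun _ => c).
Proof.
  revert c; induction n as [|n IH]; intro c; [apply derivable_upto0|].
  apply derivable_uptoS; split; [intro; apply ex_derive_const|].
  apply derivable_upto_ext with (fun _ => 0); [intro; symmetry; apply Derive_const|].
  apply IH.
Qed.

Lemma derivable_upto_plus n f g :
  derivable_upto n f -> derivable_upto n g -> derivable_upto n (fun t => f t + g t).
Proof.
  revert f g; induction n as [|n IH]; intros f g Hf Hg; [apply derivable_upto0|].
  apply derivable_uptoS in Hf as [Df Hf]; apply derivable_uptoS in Hg as [Dg Hg].
  apply derivable_uptoS; split; [intro t; apply (ex_derive_plus f g); auto|].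
  apply derivable_upto_ext with (fun t => Derive f t + Derive g t);
    [intro t; symmetry; apply Derive_plus; auto | auto].
Qed.

Lemma derivable_upto_mult n f g :
  derivable_upto n f -> derivable_upto n g -> derivable_upto n (fun t => f t * g t).
Proof.
  revert f g; induction n as [|n IH]; intros f g Hf Hg; [apply derivable_upto0|].
  pose proof (derivable_upto_pred _ _ Hf) as Hf'; pose proof (derivable_upto_pred _ _ Hg) as Hg'.
  apply derivable_uptoS in Hf as [Df Hf]; apply derivable_uptoS in Hg as [Dg Hg].
  apply derivable_uptoS; split; [intro t; apply ex_derive_mult; auto|].
  apply derivable_upto_ext with (fun t => Derive f t * g t + f t * Derive g t);
    [intro t; symmetry; apply Derive_mult; auto|].
  apply derivable_upto_plus; apply IH; auto.
Qed.

Lemma derivable_upto_inv n f :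
  (forall t, f t <> 0) -> derivable_upto n f -> derivable_upto n (fun t => / f t).
Proof.
  revert f; induction n as [|n IH]; intros f Hnz Hf; [apply derivable_upto0|].
  pose proof (derivable_upto_pred _ _ Hf) as Hf'.
  apply derivable_uptoS in Hf as [Df Hf].
  apply derivable_uptoS; split; [intro t; apply ex_derive_inv; auto|].
  apply derivable_upto_ext with (fun t => (-1) * (Derive f t * (/ f t * / f t))).
  - intro t; rewrite Derive_inv by auto; field; auto.
  - apply derivable_upto_mult; [apply derivable_upto_const|].
    apply derivable_upto_mult; auto.
    apply derivable_upto_mult; apply IH; auto.
Qed.

Lemma derivable_upto_cos_sin n : derivable_upto n cos /\ derivable_upto n sin.
Proof.
  induction n as [|n [Hc Hs]]; [split; apply derivable_upto0|].
  split; apply derivable_uptoS; split.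
  - intro t; eexists; apply is_derive_cos.
  - apply derivable_upto_ext with (fun t => (-1) * sin t).
    + intro t; rewrite (is_derive_unique _ _ _ (is_derive_cos t)); ring.
    + apply derivable_upto_mult; auto using derivable_upto_const.
  - intro t; eexists; apply is_derive_sin.
  - apply derivable_upto_ext with cos; auto.
    intro t; symmetry; apply is_derive_unique, is_derive_sin.
Qed.

Lemma smooth_antiderivative f F :
  (forall t, is_derive F t (f t)) -> (forall n, derivable_upto n f) -> smooth F.
Proof.
  intros HF Hf n t.
  assert (HFn : derivable_upto (S n) F).
  { apply derivable_uptoS; split; [intro s; eexists; apply HF|].
    apply derivable_upto_ext with f; auto.
    intro s; symmetry; apply is_derive_unique, HF. }
  apply HFn; lia.
Qed.

Lemma constant_of_is_derive_0 f : (forall t, is_derive f t 0) -> forall t, f t = f 0.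
Proof.
  intros Hf t.
  destruct (MVT_gen f 0 t (fun _ => 0)) as [c [_ Hc]]; [intros; apply Hf| |lra].
  intros y _; apply continuity_pt_filterlim, (ex_derive_continuous (V := R_NormedModule)).
  eexists; apply Hf.
Qed.

Lemma ode_of_reduced (x : R -> R) t :
  (forall s, ex_derive x s) -> ex_derive (Derive x) t -> Derive x t <> 1 ->
  cos (x t) * Derive (Derive x) t = sin (x t) * (1 - Derive x t) * (2 * Derive x t - 1) ->
  is_derive (fun s => cos (x s) / (1 - Derive x s)) t (- sin (x t)) /\
  ode_lhs x t = - sin (x t).
Proof.
  intros Hx Hx' Hv Hred.
  assert (Hv' : 1 - Derive x t <> 0) by lra.
  split.
  - assert (Ex := Hx t).
    auto_derive; [repeat split; auto|].
    change (Derive (fun y => x y) t) with (Derive x t).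
    change (Derive (fun y => Derive x y) t) with (Derive (Derive x) t).
    set (v := Derive x t) in *; set (w := Derive (Derive x) t) in *.
    replace (- sin (x t)) with
      (((cos (x t) * w) - sin (x t) * v * (1 - v)) / (1 - v) ^ 2) at 2
      by (rewrite Hred; field; auto).
    field; lra.
  - unfold ode_lhs.
    replace (cos (x t) / (1 - Derive x t) ^ 2 * Derive (Derive x) t)
      with (cos (x t) * Derive (Derive x) t / (1 - Derive x t) ^ 2) by (field; auto).
    rewrite Hred; field; auto.
Qed.

Lemma increasing_not_periodic f df :
  (forall t, is_derive f t (df t)) -> (forall t, 0 < df t) -> ~ periodic f.
Proof.
  intros Hf Hdf [T [HT Hper]].
  destruct (MVT_gen f 0 T df) as [c [_ Hc]].
  - intros; apply Hf.
  - intros; apply continuity_pt_filterlim, (ex_derive_continuous (V := R_NormedModule)).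
    eexists; apply Hf.
  - specialize (Hper 0); specialize (Hdf c); rewrite Rplus_0_l in Hper.
    rewrite Hper in Hc; nra.
Qed.

Lemma unit_circle_param u w : u ^ 2 + w ^ 2 = 1 -> exists s, cos s = u /\ sin s = w.
Proof.
  intros H.
  assert (Hu : -1 <= u <= 1) by nra.
  assert (Hw : sqrt (1 - u²) = Rabs w).
  { rewrite <- sqrt_Rsqr_abs; f_equal; unfold Rsqr; nra. }
  destruct (Rle_dec 0 w) as [hw|hw].
  - exists (acos u); rewrite cos_acos, sin_acos, Hw, Rabs_right by (auto; lra); auto.
  - exists (- acos u); rewrite cos_neg, sin_neg, cos_acos, sin_acos, Hw, Rabs_left by (auto; lra).
    split; [auto | ring].
Qed.

(** * The explicit solution *)

Section Rotation.

Variables A B : R.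

(* [(rot_u t, rot_n t)] is the vector [(B, A)] rotated by the angle [t]. *)
Definition rot_u t := B * cos t - A * sin t.
Definition rot_n t := A * cos t + B * sin t.

Lemma rot_norm t : rot_u t ^ 2 + rot_n t ^ 2 = A ^ 2 + B ^ 2.
Proof. unfold rot_u, rot_n; pose proof (sin2_cos2 t) as H; unfold Rsqr in H; nra. Qed.

Lemma rot_u_2PI t : rot_u (t + 2 * PI) = rot_u t.
Proof. unfold rot_u; rewrite cos_plus, sin_plus, cos_2PI, sin_2PI; ring. Qed.

Lemma rot_n_2PI t : rot_n (t + 2 * PI) = rot_n t.
Proof. unfold rot_n; rewrite cos_plus, sin_plus, cos_2PI, sin_2PI; ring. Qed.

Lemma rot_surj X Y :
  0 < A ^ 2 + B ^ 2 -> X ^ 2 + Y ^ 2 = A ^ 2 + B ^ 2 -> exists t, rot_u t = X /\ rot_n t = Y.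
Proof.
  intros HR HXY.
  destruct (unit_circle_param ((B * X + A * Y) / (A ^ 2 + B ^ 2))
                              ((B * Y - A * X) / (A ^ 2 + B ^ 2))) as [t [Hc Hs]].
  { replace (((B * X + A * Y) / (A ^ 2 + B ^ 2)) ^ 2 + ((B * Y - A * X) / (A ^ 2 + B ^ 2)) ^ 2)
      with ((X ^ 2 + Y ^ 2) * (A ^ 2 + B ^ 2) / (A ^ 2 + B ^ 2) ^ 2) by (field; lra).
    rewrite HXY; field; lra. }
  exists t; unfold rot_u, rot_n; rewrite Hc, Hs; split; field; lra.
Qed.

End Rotation.

Section Solution.

Variables A B k K : R.
Hypothesis rel : A ^ 2 + B ^ 2 = k ^ 2 + 2 * K.
Hypothesis K_neq0 : K <> 0.

Local Notation U := (rot_u A B).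
Local Notation N := (rot_n A B).

Definition denom t := (k + U t) ^ 2 + N t ^ 2.

Lemma denom_expand t : denom t = 2 * K + 2 * k * (k + U t).
Proof. unfold denom; pose proof (rot_norm A B t); lra. Qed.

Lemma denom_pos t : 0 < denom t.
Proof.
  destruct (Req_dec (k + U t) 0) as [E|E]; [|unfold denom; nra].
  pose proof (denom_expand t) as Hd; rewrite E in Hd; unfold denom in Hd |- *; rewrite E in Hd |- *.
  assert (N t <> 0) by (intro E'; rewrite E' in Hd; lra).
  nra.
Qed.

Lemma is_derive_denom t : is_derive denom t (-2 * k * N t).
Proof. unfold denom, rot_u, rot_n; auto_derive; auto; ring. Qed.

Definition velocity t := 1 / 2 + K / denom t.

Lemma one_sub_velocity t : 1 - velocity t = k * (k + U t) / denom t.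
Proof.
  pose proof (denom_pos t) as Hd; unfold velocity.
  rewrite denom_expand in Hd |- *; field; lra.
Qed.

Lemma velocity_gt_half t : 0 < K -> 1 / 2 < velocity t.
Proof.
  intro HK; pose proof (denom_pos t); unfold velocity.
  assert (0 < K / denom t) by (apply Rdiv_lt_0_compat; auto); lra.
Qed.

Lemma velocity_expand t : velocity t = 1 / 2 + K / (A ^ 2 + B ^ 2 + 2 * k * U t + k ^ 2).
Proof. unfold velocity; rewrite denom_expand, rel; do 2 f_equal; ring. Qed.

Lemma is_derive_velocity t : is_derive velocity t (2 * k * K * N t / denom t ^ 2).
Proof.
  pose proof (is_derive_denom t) as Hd; pose proof (denom_pos t).
  unfold velocity; auto_derive; [split; [eexists; exact Hd | lra]|].
  change (Derive (fun x : R => denom x) t) with (Derive denom t).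
  rewrite (is_derive_unique _ _ _ Hd); field; lra.
Qed.

Lemma derivable_upto_velocity n : derivable_upto n velocity.
Proof.
  destruct (derivable_upto_cos_sin n) as [Hc Hs].
  assert (Hlin : forall p q, derivable_upto n (fun t => p * cos t + q * sin t)).
  { intros p q; apply derivable_upto_plus; apply derivable_upto_mult;
      auto using derivable_upto_const. }
  apply derivable_upto_plus; [apply derivable_upto_const|].
  apply derivable_upto_mult; [apply derivable_upto_const|].
  apply derivable_upto_inv; [intro t; apply Rgt_not_eq, denom_pos|].
  unfold denom.
  apply derivable_upto_ext with (fun t => (k + U t) * (k + U t) + N t * N t); [intro; ring|].
  assert (HU : derivable_upto n (fun t => k + U t)).
  { apply derivable_upto_plus; [apply derivable_upto_const|].
    apply derivable_upto_ext with (fun t => B * cos t + (- A) * sin t);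
      [intro; unfold rot_u; ring|].
    apply Hlin. }
  apply derivable_upto_plus; apply derivable_upto_mult; auto; apply Hlin.
Qed.

Lemma continuous_velocity t : continuous velocity t.
Proof. apply (ex_derive_continuous (V := R_NormedModule)); eexists; apply is_derive_velocity. Qed.

Variable a : R.

Definition sol t := a + RInt velocity 0 t.

Lemma is_derive_sol t : is_derive sol t (velocity t).
Proof.
  assert (HI : is_derive (RInt velocity 0) t (velocity t)).
  { apply is_derive_RInt with (a := 0); [|apply continuous_velocity].
    apply filter_forall; intro y; apply (RInt_correct (V := R_CompleteNormedModule)).
    apply (ex_RInt_continuous (V := R_CompleteNormedModule)); intros; apply continuous_velocity. }
  pose proof (is_derive_plus (fun _ => a) _ t _ _ (is_derive_const a t) HI) as H.
  rewrite plus_zero_l in H; exact H.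
Qed.

Lemma Derive_sol t : Derive sol t = velocity t.
Proof. apply is_derive_unique, is_derive_sol. Qed.

Lemma sol0 : sol 0 = a.
Proof. unfold sol; rewrite RInt_point; unfold zero; simpl; ring. Qed.

Lemma smooth_sol : smooth sol.
Proof.
  apply smooth_antiderivative with velocity; [apply is_derive_sol | apply derivable_upto_velocity].
Qed.

Lemma sol_not_periodic : 0 < K -> ~ periodic sol.
Proof.
  intro HK; apply increasing_not_periodic with velocity; [apply is_derive_sol|].
  intro t; pose proof (velocity_gt_half t HK); lra.
Qed.

Lemma continuous_sol t : continuous sol t.
Proof. apply (ex_derive_continuous (V := R_NormedModule)); eexists; apply is_derive_sol. Qed.

(* [defect = 0] says that [tan sol = N / (k + U)]. *)
Definition defect t := sin (sol t) * (k + U t) - cos (sol t) * N t.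

Lemma is_derive_defect t : is_derive defect t (- k * N t * defect t / denom t).
Proof.
  pose proof (is_derive_sol t) as Hx; pose proof (denom_pos t) as Hd.
  assert (Ex : ex_derive sol t) by (eexists; exact Hx).
  unfold defect, rot_u, rot_n; auto_derive; [tauto|].
  change (Derive (fun x : R => sol x) t) with (Derive sol t).
  rewrite (is_derive_unique _ _ _ Hx).
  replace (velocity t) with (1 - (1 - velocity t)) by ring.
  rewrite one_sub_velocity; unfold denom, rot_u, rot_n in Hd |- *; field; lra.
Qed.

Lemma defect_eq0 : defect 0 = 0 -> forall t, defect t = 0.
Proof.
  intros H0 t.
  (* [defect' = (denom' / (2 denom)) defect], so [defect ^ 2 / denom] is constant. *)
  assert (Hc : forall s, is_derive (fun s => defect s ^ 2 / denom s) s 0).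
  { intro s.
    pose proof (is_derive_defect s) as Hq; pose proof (is_derive_denom s) as HD.
    pose proof (denom_pos s).
    assert (Eq : ex_derive defect s) by (eexists; exact Hq).
    assert (ED : ex_derive denom s) by (eexists; exact HD).
    auto_derive; [repeat split; auto; lra|].
    change (Derive (fun x : R => defect x) s) with (Derive defect s).
    change (Derive (fun x : R => denom x) s) with (Derive denom s).
    rewrite (is_derive_unique _ _ _ Hq), (is_derive_unique _ _ _ HD); field; lra. }
  pose proof (constant_of_is_derive_0 _ Hc t) as Ht; cbv beta in Ht.
  rewrite H0 in Ht; pose proof (denom_pos t).
  assert (defect t ^ 2 = 0) by (apply Rmult_eq_reg_r with (/ denom t);
    [unfold Rdiv in Ht; rewrite Ht; ring | apply Rinv_neq_0_compat; lra]).
  nra.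
Qed.

Hypothesis defect0 : defect 0 = 0.

Lemma sol_tan_relation t : sin (sol t) * (k + U t) = cos (sol t) * N t.
Proof. pose proof (defect_eq0 defect0 t); unfold defect in *; lra. Qed.

Lemma cos_sol_sq_denom t : cos (sol t) ^ 2 * denom t = (k + U t) ^ 2.
Proof.
  pose proof (sol_tan_relation t) as Hq; pose proof (sin2_cos2 (sol t)) as Hs.
  unfold denom, Rsqr in *.
  replace (cos (sol t) ^ 2 * ((k + U t) ^ 2 + N t ^ 2))
    with ((cos (sol t) * N t) ^ 2 + cos (sol t) ^ 2 * (k + U t) ^ 2) by ring.
  rewrite <- Hq.
  replace ((sin (sol t) * (k + U t)) ^ 2 + cos (sol t) ^ 2 * (k + U t) ^ 2)
    with ((sin (sol t) * sin (sol t) + cos (sol t) * cos (sol t)) * (k + U t) ^ 2) by ring.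
  rewrite Hs; ring.
Qed.

Lemma tan_sol t : k + U t <> 0 -> cos (sol t) <> 0 /\ tan (sol t) = N t / (k + U t).
Proof.
  intros Hn; pose proof (cos_sol_sq_denom t) as Hc; pose proof (sol_tan_relation t) as Hq.
  assert (Hc0 : cos (sol t) <> 0) by (intro E; rewrite E in Hc; apply Hn; nra).
  split; auto; unfold tan.
  replace (sin (sol t) / cos (sol t))
    with (sin (sol t) * (k + U t) / (cos (sol t) * (k + U t))) by (field; auto).
  rewrite Hq; field; auto.
Qed.

Lemma cos_sol_eq0 t : k + U t = 0 -> cos (sol t) = 0.
Proof.
  intros Hn; pose proof (cos_sol_sq_denom t) as Hc; pose proof (denom_pos t).
  rewrite Hn in Hc.
  destruct (Req_dec (cos (sol t)) 0) as [E|E]; auto.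
  exfalso; apply (pow_nonzero _ 2 E), Rmult_eq_reg_r with (denom t); lra.
Qed.

Lemma reduced_ode_sol t :
  cos (sol t) * Derive (Derive sol) t = sin (sol t) * (1 - Derive sol t) * (2 * Derive sol t - 1).
Proof.
  rewrite (Derive_ext _ _ _ Derive_sol), Derive_sol.
  rewrite (is_derive_unique _ _ _ (is_derive_velocity t)).
  rewrite one_sub_velocity; pose proof (denom_pos t); pose proof (sol_tan_relation t) as Hq.
  unfold velocity.
  replace (sin (sol t) * (k * (k + U t) / denom t) * (2 * (1 / 2 + K / denom t) - 1))
    with (2 * k * K * (sin (sol t) * (k + U t)) / denom t ^ 2) by (field; lra).
  rewrite Hq; field; lra.
Qed.

Lemma ode_sol t : Derive sol t <> 1 ->
  is_derive (fun s => cos (sol s) / (1 - Derive sol s)) t (- sin (sol t)) /\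
  ode_lhs sol t = - sin (sol t).
Proof.
  intro Hv; apply ode_of_reduced; auto using reduced_ode_sol.
  - intro s; eexists; apply is_derive_sol.
  - apply ex_derive_ext with velocity; [intro; symmetry; apply Derive_sol|].
    eexists; apply is_derive_velocity.
Qed.

Lemma Derive_sol_eq1 t : k <> 0 -> Derive sol t = 1 <-> k + U t = 0.
Proof.
  intro Hk; rewrite Derive_sol; pose proof (one_sub_velocity t) as H; pose proof (denom_pos t).
  split; intro E.
  - rewrite E, Rminus_diag in H.
    assert (k * (k + U t) = 0) by (apply Rmult_eq_reg_r with (/ denom t);
      [unfold Rdiv in H; lra | apply Rinv_neq_0_compat; lra]).
    apply Rmult_integral in H1 as [H1|H1]; [contradiction | exact H1].
  - rewrite E, Rmult_0_r in H; unfold Rdiv in H; lra.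
Qed.

Lemma energy_sol t : k <> 0 -> Derive sol t <> 1 -> energy sol t = 2 * K / k ^ 2.
Proof.
  intros Hk Hv; unfold energy.
  assert (Hn : k + U t <> 0) by (intro E; apply Hv, Derive_sol_eq1; auto).
  rewrite Derive_sol in *; pose proof (denom_pos t).
  replace (2 * velocity t - 1) with (2 * K / denom t) by (unfold velocity; field; lra).
  rewrite one_sub_velocity.
  replace (cos (sol t) ^ 2 * (2 * K / denom t) / (k * (k + U t) / denom t) ^ 2)
    with (cos (sol t) ^ 2 * denom t * (2 * K) / (k ^ 2 * (k + U t) ^ 2))
    by (field; repeat split; lra).
  rewrite cos_sol_sq_denom; field; auto.
Qed.

End Solution.

(** * The case b < 1/2 *)

Definition clamp lo hi x := (lo + hi + Rabs (x - lo) - Rabs (x - hi)) / 2.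

Lemma clamp_bounds lo hi x : lo <= hi -> lo <= clamp lo hi x <= hi.
Proof.
  unfold clamp; intro H.
  destruct (Rcase_abs (x - lo)) as [h1|h1]; [rewrite (Rabs_left _ h1)|rewrite (Rabs_right _ h1)];
  destruct (Rcase_abs (x - hi)) as [h2|h2];
    try rewrite (Rabs_left _ h2); try rewrite (Rabs_right _ h2); lra.
Qed.

Lemma clamp_interior lo hi x : lo < clamp lo hi x < hi -> clamp lo hi x = x.
Proof.
  unfold clamp.
  destruct (Rcase_abs (x - lo)) as [h1|h1]; [rewrite (Rabs_left _ h1)|rewrite (Rabs_right _ h1)];
  destruct (Rcase_abs (x - hi)) as [h2|h2];
    try rewrite (Rabs_left _ h2); try rewrite (Rabs_right _ h2); lra.
Qed.

Lemma clamp_id lo hi x : lo <= x <= hi -> clamp lo hi x = x.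
Proof.
  intro H; unfold clamp; rewrite (Rabs_pos_eq (x - lo)), (Rabs_left1 (x - hi)); lra.
Qed.

Lemma continuous_clamp lo hi (g : R -> R) s :
  continuous g s -> continuous (fun y => clamp lo hi (g y)) s.
Proof.
  intro Hg; unfold clamp, Rdiv.
  apply (continuous_mult (fun y => lo + hi + Rabs (g y - lo) - Rabs (g y - hi)) (fun _ => / 2));
    [|apply continuous_const].
  apply (continuous_minus (fun y => lo + hi + Rabs (g y - lo)) (fun y => Rabs (g y - hi))).
  - apply (continuous_plus (fun _ => lo + hi) (fun y => Rabs (g y - lo)));
      [apply continuous_const|].
    apply continuous_Rabs_comp, (continuous_minus g (fun _ => lo)); auto using continuous_const.
  - apply continuous_Rabs_comp, (continuous_minus g (fun _ => hi)); auto using continuous_const.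
Qed.

Section PhaseCurve.

Variables k K : R.
Hypothesis K_neg : K < 0.
Hypothesis k_pos : 0 < k.
Hypothesis radius_pos : 0 < k ^ 2 + 2 * K.

(* Writing [rho ^ 2 = K / (q - 1/2)], the level set [level p q = 0] is the circle
   [rho ^ 2 - 2 k rho cos p = 2 K] in polar coordinates [(rho, p)]. *)
Definition level p q := K / (q - 1 / 2) - 2 * k * sqrt (K / (q - 1 / 2)) * cos p - 2 * K.

Lemma level_radius p rho :
  0 < rho -> level p (1 / 2 + K / rho ^ 2) = rho ^ 2 - 2 * k * rho * cos p - 2 * K.
Proof.
  intro Hr; unfold level.
  replace (K / (1 / 2 + K / rho ^ 2 - 1 / 2)) with (rho ^ 2) by (field; split; lra).
  rewrite <- Rsqr_pow2, sqrt_Rsqr by lra; ring.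
Qed.

Lemma radius_of_velocity q : q < 1 / 2 -> exists rho, 0 < rho /\ q = 1 / 2 + K / rho ^ 2.
Proof.
  intro Hq; assert (Hp : 0 < K / (q - 1 / 2)) by (apply Rdiv_neg_neg; lra).
  exists (sqrt (K / (q - 1 / 2))); split; [apply sqrt_lt_R0; auto|].
  rewrite <- Rsqr_pow2, Rsqr_sqrt by lra; field; split; lra.
Qed.

Lemma continuous_level (f g : R -> R) s :
  continuous f s -> continuous g s -> g s < 1 / 2 ->
  continuous (fun y => level (f y) (g y)) s.
Proof.
  intros Hf Hg Hgs; unfold level.
  assert (Hw : continuous (fun y => K / (g y - 1 / 2)) s).
  { apply (continuous_mult (fun _ => K) (fun y => / (g y - 1 / 2))); [apply continuous_const|].
    apply continuous_Rinv_comp; [|lra].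
    apply (continuous_minus g (fun _ => 1 / 2)); auto using continuous_const. }
  apply (continuous_minus
           (fun y => K / (g y - 1 / 2) - 2 * k * sqrt (K / (g y - 1 / 2)) * cos (f y))
                          (fun _ => 2 * K)); [|apply continuous_const].
  apply (continuous_minus (fun y => K / (g y - 1 / 2))
                          (fun y => 2 * k * sqrt (K / (g y - 1 / 2)) * cos (f y))); auto.
  apply (continuous_mult (fun y => 2 * k * sqrt (K / (g y - 1 / 2))) (fun y => cos (f y))).
  - apply (continuous_mult (fun _ => 2 * k) (fun y => sqrt (K / (g y - 1 / 2))));
      [apply continuous_const | apply continuous_sqrt_comp; auto].
  - apply continuous_cos_comp; auto.
Qed.

Definition circle_radius := sqrt (k ^ 2 + 2 * K).
Definition angle_max := acos (- K / k ^ 2).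
Definition velocity_max := 1 / 2 + K / (k + circle_radius + 1) ^ 2.
Definition velocity_min := 1 / 2 + K / ((k - circle_radius) / 2) ^ 2.

Lemma circle_radius_spec : circle_radius ^ 2 = k ^ 2 + 2 * K /\ 0 < circle_radius < k.
Proof.
  unfold circle_radius.
  assert (E : sqrt (k ^ 2 + 2 * K) ^ 2 = k ^ 2 + 2 * K)
    by (rewrite <- Rsqr_pow2; apply Rsqr_sqrt; lra).
  split; [exact E|]; split; [apply sqrt_lt_R0; auto|].
  pose proof (sqrt_pos (k ^ 2 + 2 * K)); nra.
Qed.

Lemma level_pos_far p rho : 0 < rho -> circle_radius < Rabs (rho - k) ->
  0 < level p (1 / 2 + K / rho ^ 2).
Proof.
  intros Hr Hfar; rewrite level_radius by auto.
  destruct circle_radius_spec as [E _]; pose proof (COS_bound p).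
  assert (k * rho * (1 - cos p) >= 0) by (apply Rle_ge, Rmult_le_pos; nra).
  assert (circle_radius ^ 2 < (rho - k) ^ 2).
  { rewrite <- (Rsqr_pow2 (rho - k)), Rsqr_abs, Rsqr_pow2.
    pose proof (sqrt_pos (k ^ 2 + 2 * K)); unfold circle_radius in *; nra. }
  nra.
Qed.

Lemma velocity_max_spec : 0 <= velocity_max < 1 / 2 /\ forall p, 0 < level p velocity_max.
Proof.
  destruct circle_radius_spec as [E [R0 Rk]]; unfold velocity_max.
  assert (Hd : 0 < (k + circle_radius + 1) ^ 2) by (apply pow_lt; lra).
  split; [split|].
  - assert (-1 / 2 <= K / (k + circle_radius + 1) ^ 2); [|lra].
    assert (K / (k + circle_radius + 1) ^ 2 * (k + circle_radius + 1) ^ 2 = K) by (field; lra).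
    nra.
  - assert (K / (k + circle_radius + 1) ^ 2 < 0) by (apply Rdiv_neg_pos; lra); lra.
  - intro p; apply level_pos_far; [lra|]; rewrite Rabs_right; lra.
Qed.

Lemma velocity_min_spec : velocity_min <= 0 /\ forall p, 0 < level p velocity_min.
Proof.
  destruct circle_radius_spec as [E [R0 Rk]]; unfold velocity_min.
  assert (Hd : 0 < ((k - circle_radius) / 2) ^ 2) by (apply pow_lt; lra).
  split.
  - assert (K / ((k - circle_radius) / 2) ^ 2 <= -1 / 2); [|lra].
    assert (K / ((k - circle_radius) / 2) ^ 2 * ((k - circle_radius) / 2) ^ 2 = K) by (field; lra).
    nra.
  - intro p; apply level_pos_far; [lra|]; rewrite Rabs_left; lra.
Qed.

Lemma angle_max_spec :
  0 < angle_max < PI / 2 /\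
  forall q, q < 1 / 2 -> 0 < level angle_max q /\ 0 < level (- angle_max) q.
Proof.
  assert (He : 0 < - K / k ^ 2 < 1).
  { split; [apply Rdiv_lt_0_compat; nra|].
    apply Rmult_lt_reg_r with (k ^ 2); [nra|]; field_simplify; nra. }
  unfold angle_max; split.
  - split; [apply acos_bound_lt; lra|].
    rewrite acos_atan by lra.
    pose proof (atan_bound (sqrt (1 - (- K / k ^ 2)²) / (- K / k ^ 2))); lra.
  - intros q Hq; destruct (radius_of_velocity q Hq) as [rho [Hr ->]].
    rewrite !level_radius, cos_neg, cos_acos by (auto; lra).
    assert (0 < - K * (K + 2 * k ^ 2) / k ^ 2) by (apply Rdiv_lt_0_compat; nra).
    replace (rho ^ 2 - 2 * k * rho * (- K / k ^ 2) - 2 * K)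
      with ((rho + K / k) ^ 2 + - K * (K + 2 * k ^ 2) / k ^ 2) by (field; lra).
    pose proof (pow2_ge_0 (rho + K / k)); lra.
Qed.

Lemma level_origin_neg : level 0 0 < 0.
Proof.
  destruct (radius_of_velocity 0 ltac:(lra)) as [rho [Hr E]].
  replace 0 with (1 / 2 + K / rho ^ 2) at 2 by (symmetry; exact E).
  rewrite level_radius, cos_0 by auto.
  assert (EK : K = - rho ^ 2 / 2).
  { replace K with (K / rho ^ 2 * rho ^ 2) by (field; lra).
    replace (K / rho ^ 2) with (- 1 / 2) by lra; field. }
  nra.
Qed.

Lemma surrounds_origin_of_level (S : R * R -> Prop) :
  ~ S (0, 0) ->
  (forall p q, - (PI / 2) < p < PI / 2 -> q < 1 / 2 -> level p q = 0 -> S (p, q)) ->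
  surrounds_origin S.
Proof.
  intros HS0 HS; split; [exact HS0|].
  destruct velocity_max_spec as [[Hhi0 Hhi] Phi].
  destruct velocity_min_spec as [Hlo Plo].
  destruct angle_max_spec as [Hm Pm].
  set (m := angle_max) in *; set (lo := velocity_min) in *; set (hi := velocity_max) in *.
  exists (m ^ 2 + (hi - lo) ^ 2 + 1); intros g1 g2 Hg Hg1 Hg2 HM.
  (* the level along the path clamped into the box [-m, m] x [lo, hi]; it is positive
     on the boundary of the box, so where it is not positive the clamp does nothing *)
  set (h := fun s => level (clamp (- m) m (g1 s)) (clamp lo hi (g2 s))).
  assert (Hin : forall s, h s <= 0 -> - m < g1 s < m /\ lo < g2 s < hi).
  { intros s Hs; unfold h in Hs.
    destruct (clamp_bounds (- m) m (g1 s)) as [C1 C1']; [lra|].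
    destruct (clamp_bounds lo hi (g2 s)) as [C2 C2']; [lra|].
    assert (I2 : lo < clamp lo hi (g2 s) < hi).
    { specialize (Plo (clamp (- m) m (g1 s))); specialize (Phi (clamp (- m) m (g1 s))).
      split; apply Rnot_le_lt; intro E;
        [replace (clamp lo hi (g2 s)) with lo in Hs by lra
        |replace (clamp lo hi (g2 s)) with hi in Hs by lra]; lra. }
    assert (I1 : - m < clamp (- m) m (g1 s) < m).
    { destruct (Pm (clamp lo hi (g2 s))) as [P1 P2]; [lra|].
      split; apply Rnot_le_lt; intro E;
        [replace (clamp (- m) m (g1 s)) with (- m) in Hs by lra
        |replace (clamp (- m) m (g1 s)) with m in Hs by lra]; lra. }
    rewrite (clamp_interior _ _ _ I1) in I1; rewrite (clamp_interior _ _ _ I2) in I2; auto. }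
  destruct (Ranalysis5.IVT_interv h 0 1) as [s [Hs Hhs]].
  - intros y Hy; apply continuity_pt_filterlim.
    destruct (Hg y Hy) as [C1 C2].
    apply continuous_level; try apply continuous_clamp; auto.
    destruct (clamp_bounds lo hi (g2 y)); lra.
  - lra.
  - unfold h; rewrite Hg1, Hg2, !clamp_id by lra; apply level_origin_neg.
  - destruct (Rlt_le_dec 0 (h 1)) as [H|H]; auto.
    destruct (Hin 1 H) as [B1 B2].
    assert (g1 1 ^ 2 <= m ^ 2) by nra; assert (g2 1 ^ 2 <= (hi - lo) ^ 2) by nra; lra.
  - destruct (Hin s ltac:(lra)) as [B1 B2].
    exists s; split; auto; apply HS; try lra.
    unfold h in Hhs; rewrite !clamp_id in Hhs by lra; exact Hhs.
Qed.

End PhaseCurve.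

Lemma range_of_cos_neq0 (f : R -> R) :
  (forall t, continuous f t) -> - (PI / 2) < f 0 < PI / 2 -> (forall t, cos (f t) <> 0) ->
  forall t, - (PI / 2) < f t < PI / 2.
Proof.
  intros Hf H0 Hc t.
  destruct (Rlt_le_dec (f t) (PI / 2)) as [h1|h1];
    [destruct (Rlt_le_dec (- (PI / 2)) (f t)) as [h2|h2]; [lra|]|].
  - destruct (IVT_gen_consistent f 0 t (- (PI / 2)) Hf) as [s [_ Hs]].
    + split; [apply Rle_trans with (f t); [apply Rmin_r | lra]
             |apply Rle_trans with (f 0); [lra | apply Rmax_l]].
    + exfalso; apply (Hc s); rewrite Hs, cos_neg; apply cos_PI2.
  - destruct (IVT_gen_consistent f 0 t (PI / 2) Hf) as [s [_ Hs]].
    + split; [apply Rle_trans with (f 0); [apply Rmin_l | lra]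
             |apply Rle_trans with (f t); [lra | apply Rmax_r]].
    + exfalso; apply (Hc s); rewrite Hs; apply cos_PI2.
Qed.

Section BelowHalf.

Variables A B k K a : R.
Hypothesis rel : A ^ 2 + B ^ 2 = k ^ 2 + 2 * K.
Hypothesis K_neg : K < 0.
Hypothesis k_pos : 0 < k.
Hypothesis AB_pos : 0 < A ^ 2 + B ^ 2.
Hypothesis a_range : - (PI / 2) < a < PI / 2.
Hypothesis defect0 : defect A B k K a 0 = 0.

Let K_neq0 : K <> 0 := Rlt_not_eq _ _ K_neg.

Local Notation U := (rot_u A B).
Local Notation N := (rot_n A B).
Local Notation x := (sol A B k K a).

Lemma k_add_rot_u_pos t : 0 < k + U t.
Proof. pose proof (rot_norm A B t); nra. Qed.

Lemma sol_range t : - (PI / 2) < x t < PI / 2.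
Proof.
  apply range_of_cos_neq0;
    [exact (continuous_sol A B k K rel K_neq0 a) | rewrite sol0; exact a_range|].
  intro s; apply (tan_sol A B k K rel K_neq0 a defect0 s).
  pose proof (k_add_rot_u_pos s); lra.
Qed.

Lemma sol_atan t : x t = atan (N t / (k + U t)).
Proof.
  rewrite <- (atan_tan (x t)) by apply sol_range; f_equal.
  apply (tan_sol A B k K rel K_neq0 a defect0 t); pose proof (k_add_rot_u_pos t); lra.
Qed.

Lemma periodic_sol : periodic x.
Proof.
  exists (2 * PI); split; [pose proof PI_RGT_0; lra|].
  intro t; rewrite !sol_atan, rot_u_2PI, rot_n_2PI; reflexivity.
Qed.

Lemma sol_orbit_symmetric : symmetric_wrt_vaxis (phase_orbit x).
Proof.
  intros p q [t Ht]; injection Ht as -> ->.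
  destruct (rot_surj A B (U t) (- N t)) as [s [Hu Hn]]; auto.
  { rewrite <- (rot_norm A B t); ring. }
  exists s; rewrite !Derive_sol, !sol_atan, Hu, Hn by auto.
  unfold velocity, denom; rewrite Hu, Hn, Rdiv_opp_l, atan_opp.
  do 3 f_equal; ring.
Qed.

Lemma phase_orbit_of_level p q :
  - (PI / 2) < p < PI / 2 -> q < 1 / 2 -> level k K p q = 0 -> phase_orbit x (p, q).
Proof.
  intros Hp Hq Hl.
  destruct (radius_of_velocity K K_neg q Hq) as [rho [Hr ->]].
  rewrite level_radius in Hl by auto.
  pose proof (cos_gt_0 p ltac:(lra) ltac:(lra)) as Hc.
  pose proof (sin2_cos2 p) as Hsc; unfold Rsqr in Hsc.
  (* the point of the circle of radius [rho] around [(-k, 0)] in direction [p] *)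
  destruct (rot_surj A B (rho * cos p - k) (rho * sin p)) as [t [Hu Hn]]; auto; [nra|].
  exists t; rewrite Derive_sol by auto; f_equal.
  - rewrite sol_atan, Hu, Hn.
    replace (rho * sin p / (k + (rho * cos p - k))) with (tan p) by (unfold tan; field; nra).
    rewrite atan_tan; lra.
  - unfold velocity, denom; rewrite Hu, Hn.
    replace ((k + (rho * cos p - k)) ^ 2 + (rho * sin p) ^ 2) with (rho ^ 2) by nra; reflexivity.
Qed.

Lemma origin_not_on_orbit : ~ phase_orbit x (0, 0).
Proof.
  intros [t Ht]; injection Ht as E1 E2; symmetry in E1, E2.
  rewrite Derive_sol in E2 by auto; rewrite sol_atan in E1.
  pose proof (k_add_rot_u_pos t); pose proof (denom_pos A B k K rel K_neq0 t).
  assert (EN : N t = 0).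
  { apply (f_equal tan) in E1; rewrite tan_atan, tan_0 in E1.
    apply Rmult_eq_reg_r with (/ (k + U t)); [rewrite Rmult_0_l; exact E1|].
    apply Rinv_neq_0_compat; lra. }
  assert (ED : denom A B k t = - 2 * K).
  { unfold velocity in E2; replace K with (K / denom A B k t * denom A B k t) by (field; lra).
    replace (K / denom A B k t) with (- 1 / 2) by lra; field. }
  rewrite (denom_expand A B k K rel t) in ED.
  pose proof (rot_norm A B t) as Hn; rewrite EN in Hn.
  assert (U t = - 2 * k) by nra.
  nra.
Qed.

Lemma sol_orbit_surrounds_origin : surrounds_origin (phase_orbit x).
Proof.
  apply surrounds_origin_of_level with k K; auto; [lra | exact origin_not_on_orbit |].
  exact phase_orbit_of_level.
Qed.

End BelowHalf.

(** * The case b > 1/2 *)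

Lemma cos_eq_iff x y :
  cos x = cos y <-> exists n : Z, x = y + 2 * PI * IZR n \/ x = - y + 2 * PI * IZR n.
Proof.
  assert (Hd : cos x - cos y = - 2 * sin ((x + y) / 2) * sin ((x - y) / 2)).
  { pose proof (cos_plus ((x + y) / 2) ((x - y) / 2)) as Hp.
    pose proof (cos_minus ((x + y) / 2) ((x - y) / 2)) as Hm.
    replace ((x + y) / 2 + (x - y) / 2) with x in Hp by field.
    replace ((x + y) / 2 - (x - y) / 2) with y in Hm by field.
    rewrite Hp, Hm; ring. }
  split.
  - intro H; assert (E : sin ((x + y) / 2) * sin ((x - y) / 2) = 0) by lra.
    apply Rmult_integral in E as [E|E]; destruct (sin_eq_0_0 _ E) as [n Hn]; exists n; lra.
  - intros [n [E|E]]; apply Rminus_diag_uniq; rewrite Hd.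
    + rewrite (sin_eq_0_1 ((x - y) / 2)) by (exists n; lra); ring.
    + rewrite (sin_eq_0_1 ((x + y) / 2)) by (exists n; lra); ring.
Qed.

(* The solutions of [cos (t + phi) = cos al], [0 < al < PI], in increasing order:
   [- phi - al + 2 PI n] for [j = 2 n] and [- phi + al + 2 PI n] for [j = 2 n + 1]. *)
Definition cos_root_seq (phi al : R) (j : Z) :=
  - phi - al + 2 * al * IZR (j mod 2) + 2 * PI * IZR (j / 2).

Lemma cos_root_seq_even phi al n : cos_root_seq phi al (2 * n) = - phi - al + 2 * PI * IZR n.
Proof.
  unfold cos_root_seq.
  replace ((2 * n) mod 2)%Z with 0%Z by (Z.to_euclidean_division_equations; lia).
  replace ((2 * n) / 2)%Z with n by (Z.to_euclidean_division_equations; lia); simpl; ring.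
Qed.

Lemma cos_root_seq_odd phi al n : cos_root_seq phi al (2 * n + 1) = - phi + al + 2 * PI * IZR n.
Proof.
  unfold cos_root_seq.
  replace ((2 * n + 1) mod 2)%Z with 1%Z by (Z.to_euclidean_division_equations; lia).
  replace ((2 * n + 1) / 2)%Z with n by (Z.to_euclidean_division_equations; lia); simpl; ring.
Qed.

Lemma cos_root_seq_lt phi al i j :
  0 < al < PI -> (i < j)%Z -> cos_root_seq phi al i < cos_root_seq phi al j.
Proof.
  intros Hal Hij; unfold cos_root_seq; pose proof PI_RGT_0 as HPI.
  assert (H : ((i / 2 + 1 <= j / 2 /\ 0 <= i mod 2 <= 1 /\ 0 <= j mod 2 <= 1)
               \/ (i / 2 = j / 2 /\ i mod 2 = 0 /\ j mod 2 = 1))%Z)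
    by (Z.to_euclidean_division_equations; lia).
  destruct H as [[H1 [[H2 H2'] [H3 H3']]] | [-> [-> ->]]]; [|simpl; lra].
  apply IZR_le in H1, H2, H2', H3, H3'; rewrite plus_IZR in H1; simpl in *; nra.
Qed.

Lemma cos_root_seq_spec phi al t :
  cos (t + phi) = cos al <-> exists j, t = cos_root_seq phi al j.
Proof.
  rewrite cos_eq_iff; split.
  - intros [n [H|H]]; [exists (2 * n + 1)%Z; rewrite cos_root_seq_odd
                      |exists (2 * n)%Z; rewrite cos_root_seq_even]; lra.
  - intros [j ->]; exists (j / 2)%Z.
    assert (H : (j mod 2 = 0 \/ j mod 2 = 1)%Z) by (Z.to_euclidean_division_equations; lia).
    unfold cos_root_seq; destruct H as [-> | ->]; simpl; [right | left]; ring.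
Qed.

Lemma exists_first_positive (e : Z -> R) i n :
  e i <= 0 -> 0 < e (i + Z.of_nat n)%Z -> exists j, 0 < e j /\ e (j - 1)%Z <= 0.
Proof.
  revert i; induction n as [|n IH]; intros i Hi Hn; [rewrite Z.add_0_r in Hn; lra|].
  destruct (Rlt_le_dec 0 (e (i + 1)%Z)) as [Hp|Hp].
  - exists (i + 1)%Z; replace (i + 1 - 1)%Z with i by lia; auto.
  - apply (IH (i + 1)%Z Hp).
    replace (i + 1 + Z.of_nat n)%Z with (i + Z.of_nat (S n))%Z by lia; auto.
Qed.

Lemma root_enumeration_of_seq A B b (e : Z -> R) :
  (forall i j, (i < j)%Z -> e i < e j) ->
  (forall t, B * cos t - A * sin t = 2 * (b - 1) <-> exists j, t = e j) ->
  (exists j0, 0 < e j0 /\ e (j0 - 1)%Z <= 0) ->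
  exists tj, root_enumeration A B b tj.
Proof.
  intros Hmono Hroots [j0 [Hj0 Hj0']].
  assert (Hle : forall i j, (i <= j)%Z -> e i <= e j).
  { intros i j H; destruct (Z.eq_dec i j) as [->|]; [lra|]; left; apply Hmono; lia. }
  exists (fun j => e (j + j0)%Z); split; [|split; [|split]].
  - intros i j Hij; apply Hmono; lia.
  - intro t; rewrite Hroots; split; intros [j Hj]; [exists (j - j0)%Z | exists (j + j0)%Z];
      rewrite Hj; auto; f_equal; lia.
  - exact Hj0.
  - intros t Ht Htpos; apply Hroots in Ht as [j ->]; simpl.
    destruct (Z_le_gt_dec j0 j) as [H|H]; [apply Hle; lia|].
    pose proof (Hle j (j0 - 1)%Z ltac:(lia)); lra.
Qed.

Lemma exists_root_enumeration A B b :
  (2 * (b - 1)) ^ 2 < A ^ 2 + B ^ 2 -> exists tj, root_enumeration A B b tj.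
Proof.
  intro Hr; set (r := 2 * (b - 1)) in *.
  set (R := sqrt (A ^ 2 + B ^ 2)).
  assert (ER : R ^ 2 = A ^ 2 + B ^ 2) by (unfold R; rewrite <- Rsqr_pow2; apply Rsqr_sqrt; nra).
  assert (Rp : 0 < R) by (apply sqrt_lt_R0; nra).
  destruct (unit_circle_param (B / R) (A / R)) as [phi [Hc Hs]].
  { replace ((B / R) ^ 2 + (A / R) ^ 2) with ((A ^ 2 + B ^ 2) / R ^ 2) by (field; lra).
    rewrite ER; field; nra. }
  assert (Hrr : -1 < r / R < 1).
  { rewrite <- ER in Hr; assert (- R < r < R) by nra.
    assert (r / R * R = r) by (field; lra).
    split; apply Rmult_lt_reg_r with R; nra. }
  set (al := acos (r / R)).
  assert (Hal : 0 < al < PI) by (apply acos_bound_lt; lra).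
  set (e := cos_root_seq phi al).
  apply root_enumeration_of_seq with e; [intros; apply cos_root_seq_lt; auto| |].
  - (* [B cos t - A sin t = R cos (t + phi)] *)
    intro t; fold r; unfold e; rewrite <- cos_root_seq_spec; unfold al.
    rewrite cos_acos, cos_plus, Hc, Hs by lra.
    split; intro H; [rewrite <- H; field; lra|].
    apply Rmult_eq_reg_r with (/ R); [|apply Rinv_neq_0_compat; lra].
    replace ((B * cos t - A * sin t) * / R) with (cos t * (B / R) - sin t * (A / R))
      by (field; lra).
    rewrite H; field; lra.
  - set (n := up ((phi + al) / (2 * PI))).
    destruct (archimed ((phi + al) / (2 * PI))) as [A1 A2]; fold n in A1, A2.
    pose proof PI_RGT_0.
    assert ((phi + al) / (2 * PI) * (2 * PI) = phi + al) by (field; lra).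
    apply exists_first_positive with (2 * (n - 1))%Z 2%nat; unfold e.
    + rewrite cos_root_seq_even, minus_IZR; nra.
    + replace (2 * (n - 1) + Z.of_nat 2)%Z with (2 * n)%Z by lia.
      rewrite cos_root_seq_even; nra.
Qed.

Lemma same_sign_of_no_zero (f : R -> R) s y :
  (forall t, continuous f t) -> (forall z, Rmin s y <= z <= Rmax s y -> f z <> 0) ->
  0 < f s * f y.
Proof.
  intros Hf Hnz; apply Rnot_le_lt; intro H.
  destruct (IVT_gen_consistent f s y 0 Hf) as [z [Hz Hfz]]; [|exact (Hnz z Hz Hfz)].
  unfold Rmin, Rmax; destruct (Rle_dec (f s) (f y)); nra.
Qed.

Lemma sign_change_at_simple_zero (f : R -> R) l tau t1 t2 :
  (forall t, continuous f t) -> is_derive f tau l -> l <> 0 -> f tau = 0 ->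
  (forall y, t1 < y < t2 -> y <> tau -> f y <> 0) ->
  forall s s', t1 < s < tau -> tau < s' < t2 -> f s * f s' < 0.
Proof.
  intros Hf Hl Hl0 Hf0 Hnz s s' Hs Hs'; apply Rnot_le_lt; intro Hss'.
  assert (Hside : forall y y', t1 < Rmin y y' -> Rmax y y' < t2 ->
            (tau < Rmin y y' \/ Rmax y y' < tau) -> 0 < f y * f y').
  { intros y y' H1 H2 H3; apply same_sign_of_no_zero; auto.
    intros z Hz; apply Hnz; lra. }
  assert (Hfs : 0 < f s * f s') by
    (pose proof (Hnz s ltac:(lra) ltac:(lra)); pose proof (Hnz s' ltac:(lra) ltac:(lra));
     destruct (Rtotal_order (f s * f s') 0) as [|[E|]]; [lra| |lra];
     apply Rmult_integral in E as [E|E]; contradiction).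
  (* then [tau] would be a minimum of [f s * f] on [(t1, t2)], with non-zero derivative *)
  assert (Hg : derivable_pt_lim (fun t => f s * f t) tau (f s * l)).
  { apply is_derive_Reals, (is_derive_scal f tau (f s) l Hl). }
  apply Hl0, Rmult_eq_reg_l with (f s); [|pose proof (Hnz s ltac:(lra) ltac:(lra)); auto].
  rewrite Rmult_0_r; apply (deriv_minimum _ t1 t2 tau (exist _ _ Hg)); try lra.
  intros y Hy1 Hy2; rewrite Hf0, Rmult_0_r.
  destruct (Rtotal_order y tau) as [Hy|[->|Hy]]; [| rewrite Hf0; lra |].
  - pose proof (Hside s y); unfold Rmin, Rmax in *; destruct (Rle_dec s y); nra.
  - pose proof (Hside s' y); unfold Rmin, Rmax in *; destruct (Rle_dec s' y); nra.
Qed.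

Lemma velocity_strip A B k K t :
  A ^ 2 + B ^ 2 = k ^ 2 + 2 * K -> 0 < K -> k <> 0 ->
  let S := sqrt (1 + 2 * K / k ^ 2) in
  S / (S + 1) <= velocity A B k K t <= S / (S - 1).
Proof.
  intros rel HK Hk S.
  (* with [r = S |k|] the radius of the circle of [(rot_u, rot_n)]:
     [(r - |k|)^2 <= denom <= (r + |k|)^2] *)
  set (kap := Rabs k).
  assert (Hkap : 0 < kap) by (apply Rabs_pos_lt; auto).
  assert (Ek : k ^ 2 = kap ^ 2) by (unfold kap; rewrite <- !Rsqr_pow2; apply Rsqr_abs).
  assert (Hk2 : 0 < k ^ 2) by (rewrite Ek; apply pow_lt; lra).
  assert (ES : S ^ 2 = 1 + 2 * K / k ^ 2)
    by (unfold S; rewrite <- Rsqr_pow2; apply Rsqr_sqrt; apply Rplus_le_le_0_compat;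
        [lra | apply Rlt_le, Rdiv_lt_0_compat; lra]).
  assert (S1 : 1 < S).
  { unfold S; rewrite <- sqrt_1 at 1; apply sqrt_lt_1; [lra | |];
      [apply Rplus_le_le_0_compat; [lra | apply Rlt_le, Rdiv_lt_0_compat; lra]|].
    assert (0 < 2 * K / k ^ 2) by (apply Rdiv_lt_0_compat; lra); lra. }
  set (r := S * kap).
  assert (Er : r ^ 2 = k ^ 2 + 2 * K)
    by (unfold r; rewrite Rpow_mult_distr, ES, <- Ek; field; lra).
  assert (HU : Rabs (k * rot_u A B t) <= kap * r).
  { rewrite Rabs_mult; apply Rmult_le_compat_l; [lra|].
    pose proof (rot_norm A B t); pose proof (Rabs_pos (rot_u A B t)).
    assert (Rabs (rot_u A B t) ^ 2 <= r ^ 2)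
      by (rewrite <- Rsqr_pow2, <- Rsqr_abs, Rsqr_pow2; nra).
    assert (0 <= r) by (unfold r; nra); nra. }
  apply Rabs_le_between in HU.
  assert (HD : denom A B k t = r ^ 2 + 2 * k * rot_u A B t + kap ^ 2)
    by (rewrite (denom_expand A B k K rel), Er, <- Ek; ring).
  assert (Hrk : kap < r) by (unfold r; nra).
  assert (EK : K = (r ^ 2 - kap ^ 2) / 2) by (rewrite Er, Ek; field).
  assert (D1 : (r - kap) ^ 2 <= denom A B k t) by (rewrite HD; nra).
  assert (D2 : denom A B k t <= (r + kap) ^ 2) by (rewrite HD; nra).
  assert (Dp : 0 < (r - kap) ^ 2) by (apply pow_lt; lra).
  unfold velocity; split.
  - assert (K / (r + kap) ^ 2 <= K / denom A B k t).
    { unfold Rdiv; apply Rmult_le_compat_l; [lra|]; apply Rinv_le_contravar; lra. }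
    replace (S / (S + 1)) with (1 / 2 + K / (r + kap) ^ 2); [lra|].
    rewrite EK; unfold r; field; split; nra.
  - assert (K / denom A B k t <= K / (r - kap) ^ 2).
    { unfold Rdiv; apply Rmult_le_compat_l; [lra|]; apply Rinv_le_contravar; lra. }
    replace (S / (S - 1)) with (1 / 2 + K / (r - kap) ^ 2); [lra|].
    rewrite EK; unfold r; field; split; nra.
Qed.

Lemma is_lim_punctured (f g : R -> R) tau t1 t2 l :
  t1 < tau < t2 -> (forall y, t1 < y < t2 -> y <> tau -> f y = g y) ->
  is_lim g tau l -> is_lim f tau l.
Proof.
  intros Ht Hfg; apply is_lim_ext_loc.
  assert (Hp : 0 < Rmin (tau - t1) (t2 - tau)) by (apply Rmin_glb_lt; lra).
  exists (mkposreal _ Hp); intros y Hy Hne; symmetry; apply Hfg; auto.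
  unfold ball in Hy; simpl in Hy; unfold AbsRing_ball, abs, minus, plus, opp in Hy; simpl in Hy.
  apply Rabs_lt_between in Hy.
  pose proof (Rmin_l (tau - t1) (t2 - tau)); pose proof (Rmin_r (tau - t1) (t2 - tau)); lra.
Qed.

Lemma root_enumeration_le A B b tj i j :
  root_enumeration A B b tj -> (i <= j)%Z -> tj i <= tj j.
Proof.
  intros [Hmono _] H; destruct (Z.eq_dec i j) as [->|]; [lra | left; apply Hmono; lia].
Qed.

Section AboveHalf.

Variables A B b k K a : R.
Hypothesis rel : A ^ 2 + B ^ 2 = k ^ 2 + 2 * K.
Hypothesis K_pos : 0 < K.
Hypothesis k_def : k = 2 * (1 - b).
Hypothesis k_neq0 : k <> 0.
Hypothesis defect0 : defect A B k K a 0 = 0.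

Let K_neq0 : K <> 0 := Rgt_not_eq _ _ K_pos.

Local Notation U := (rot_u A B).
Local Notation N := (rot_n A B).
Local Notation x := (sol A B k K a).

Variable tj : Z -> R.
Hypothesis enum : root_enumeration A B b tj.

Lemma roots_k_add_rot_u t : k + U t = 0 <-> exists j, t = tj j.
Proof.
  destruct enum as [_ [Hroots _]]; rewrite <- Hroots, k_def; unfold rot_u.
  clear - Hroots; lra.
Qed.

Lemma Derive_sol_eq1_roots t : Derive x t = 1 <-> exists j, t = tj j.
Proof. rewrite Derive_sol_eq1 by auto; apply roots_k_add_rot_u. Qed.

Lemma roots_neighbours j : tj (j - 1)%Z < tj j < tj (j + 1)%Z.
Proof. destruct enum as [Hmono _]; split; apply Hmono; lia. Qed.

Lemma Derive_sol_neq1_near_root j y :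
  tj (j - 1)%Z < y < tj (j + 1)%Z -> y <> tj j -> Derive x y <> 1.
Proof.
  intros Hy Hne E; apply Derive_sol_eq1_roots in E as [i ->].
  destruct (Z.lt_total i j) as [H|[->|H]]; [| contradiction |].
  - pose proof (root_enumeration_le _ _ _ _ i (j - 1)%Z enum ltac:(lia)); lra.
  - pose proof (root_enumeration_le _ _ _ _ (j + 1)%Z i enum ltac:(lia)); lra.
Qed.

Lemma sol_at_root j :
  (exists n : Z, x (tj j) = (2 * IZR n + 1) * (PI / 2)) /\ Derive x (tj j) = 1.
Proof.
  split; [|apply Derive_sol_eq1_roots; exists j; auto].
  destruct (cos_eq_0_0 (x (tj j))) as [n Hn].
  - apply (cos_sol_eq0 A B k K rel K_neq0 a defect0), roots_k_add_rot_u; exists j; auto.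
  - exists n; rewrite Hn; field.
Qed.

Lemma ode_lim_at_root j : is_lim (ode_lhs x) (tj j) (- sin (x (tj j))).
Proof.
  apply (is_lim_punctured _ (fun y => - sin (x y)) _ (tj (j - 1)%Z) (tj (j + 1)%Z));
    [apply roots_neighbours | |].
  - intros y Hy Hne.
    apply (ode_sol A B k K rel K_neq0 a defect0), (Derive_sol_neq1_near_root j); auto.
  - apply (is_lim_continuity (fun y => - sin (x y))), continuity_pt_filterlim.
    apply (continuous_opp (fun y => sin (x y))), (continuous_comp x sin);
      [apply continuous_sol; auto | apply continuous_sin].
Qed.

Lemma energy_lim_at_root j : is_lim (energy x) (tj j) (2 * K / k ^ 2).
Proof.
  apply (is_lim_punctured _ (fun _ => 2 * K / k ^ 2) _ (tj (j - 1)%Z) (tj (j + 1)%Z));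
    [apply roots_neighbours | | apply is_lim_const].
  intros y Hy Hne; apply (energy_sol A B k K rel K_neq0 a defect0); auto.
  apply (Derive_sol_neq1_near_root j); auto.
Qed.

Lemma Derive_sol_crosses_one j s s' :
  tj (j - 1)%Z < s < tj j -> tj j < s' < tj (j + 1)%Z ->
  (Derive x s - 1) * (Derive x s' - 1) < 0.
Proof.
  intros Hs Hs'.
  assert (Hroot : k + U (tj j) = 0) by (apply roots_k_add_rot_u; exists j; auto).
  assert (HdU : forall t, is_derive (fun t => k + U t) t (- N t))
    by (intro t; unfold rot_u, rot_n; auto_derive; auto; ring).
  assert (Hsign : (k + U s) * (k + U s') < 0).
  { apply (sign_change_at_simple_zero (fun t => k + U t) (- N (tj j)) (tj j)
                                      (tj (j - 1)%Z) (tj (j + 1)%Z));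
      auto.
    - intro t; apply (ex_derive_continuous (V := R_NormedModule)); eexists; apply HdU.
    - pose proof (denom_pos A B k K rel K_neq0 (tj j)) as HD; unfold denom in HD.
      rewrite Hroot in HD; intro E; rewrite <- (Ropp_involutive (N (tj j))), E in HD; lra.
    - intros y Hy Hne E; apply (Derive_sol_neq1_near_root j y Hy Hne), Derive_sol_eq1; auto. }
  rewrite !Derive_sol by auto.
  replace ((velocity A B k K s - 1) * (velocity A B k K s' - 1))
    with ((1 - velocity A B k K s) * (1 - velocity A B k K s')) by ring.
  rewrite !one_sub_velocity by auto.
  pose proof (denom_pos A B k K rel K_neq0 s); pose proof (denom_pos A B k K rel K_neq0 s').
  replace (k * (k + U s) / denom A B k s * (k * (k + U s') / denom A B k s'))
    with (k ^ 2 / (denom A B k s * denom A B k s') * ((k + U s) * (k + U s'))) by (field; lra).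
  assert (0 < k ^ 2 / (denom A B k s * denom A B k s'))
    by (apply Rdiv_lt_0_compat; [apply pow2_gt_0 | apply Rmult_lt_0_compat]; auto).
  nra.
Qed.

End AboveHalf.

(** * The initial value problem *)

Section InitialData.

Variables a b : R.
Hypothesis cos_a_pos : 0 < cos a.

Local Notation A := (sin (2 * a)).
Local Notation B := (2 * b - 1 + cos (2 * a)).
Local Notation k := (2 * (1 - b)).
Local Notation K := (2 * (2 * b - 1) * cos a ^ 2).

Lemma initial_relation : A ^ 2 + B ^ 2 = k ^ 2 + 2 * K.
Proof.
  rewrite sin_2a, cos_2a_cos; pose proof (sin2_cos2 a) as H; unfold Rsqr in H.
  replace (sin a ^ 2) with (1 - cos a ^ 2) by (simpl; lra).
  replace ((2 * sin a * cos a) ^ 2) with (4 * (sin a * sin a) * cos a ^ 2) by ring.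
  replace (sin a * sin a) with (1 - cos a * cos a) by lra; ring.
Qed.

Lemma initial_defect : defect A B k K a 0 = 0.
Proof.
  unfold defect, rot_u, rot_n; rewrite sol0, cos_0, sin_0, sin_2a, cos_2a_cos; ring.
Qed.

Lemma initial_velocity : velocity A B k K 0 = b.
Proof.
  assert (E : denom A B k 0 = 4 * cos a ^ 2).
  { unfold denom, rot_u, rot_n; rewrite cos_0, sin_0, sin_2a, cos_2a_cos.
    pose proof (sin2_cos2 a) as H; unfold Rsqr in H.
    replace ((2 * sin a * cos a * 1 + (2 * b - 1 + (2 * cos a * cos a - 1)) * 0) ^ 2)
      with (4 * (sin a * sin a) * cos a ^ 2) by ring.
    replace (sin a * sin a) with (1 - cos a * cos a) by lra; ring. }
  unfold velocity; rewrite E; field; lra.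
Qed.

Lemma initial_AB_pos : - (PI / 2) < a < PI / 2 -> 0 < Rabs a + Rabs b -> 0 < A ^ 2 + B ^ 2.
Proof.
  intros Ha Hab; destruct (Rle_lt_dec (A ^ 2 + B ^ 2) 0) as [H|H]; auto.
  assert (HA : A = 0) by (pose proof (pow2_ge_0 A); pose proof (pow2_ge_0 B);
                         apply Rsqr_eq_0; unfold Rsqr; simpl in *; lra).
  assert (HB : B = 0) by (pose proof (pow2_ge_0 A); pose proof (pow2_ge_0 B);
                         apply Rsqr_eq_0; unfold Rsqr; simpl in *; lra).
  rewrite sin_2a in HA.
  assert (Hs : sin a = 0) by (apply Rmult_integral in HA as [HA|HA]; lra).
  assert (a = 0) by (rewrite <- (asin_sin a), Hs by lra; apply asin_0).
  subst a; rewrite Rmult_0_r, cos_0 in HB.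
  assert (b = 0) by lra; subst b; rewrite Rabs_R0 in Hab; lra.
Qed.

End InitialData.

Theorem mainTheorem1 :
  forall a b : R,
    Rabs a < PI / 2 -> b <> 1 / 2 -> b <> 1 -> 0 < Rabs a + Rabs b ->
    let c := (2 * b - 1) * (cos a) ^ 2 / (1 - b) ^ 2 in
    let A := sin (2 * a) in
    let B := 2 * b - 1 + cos (2 * a) in
    exists x : R -> R,
      smooth x /\ x 0 = a /\ Derive x 0 = b /\
      (forall t : R, 2 * (1 - b) + B * cos t - A * sin t <> 0 ->
         cos (x t) <> 0 /\
         tan (x t) = (A * cos t + B * sin t) / (2 * (1 - b) + B * cos t - A * sin t)) /\
      (forall t : R,
         Derive x t = 1 / 2 + 2 * (2 * b - 1) * (cos a) ^ 2 /
           (A ^ 2 + B ^ 2 + 4 * (1 - b) * (B * cos t - A * sin t) + 4 * (1 - b) ^ 2)) /\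
      (forall t : R, cos (x t) <> 0 -> Derive x t <> 1 ->
         is_derive (fun s => cos (x s) / (1 - Derive x s)) t (- sin (x t)) /\
         ode_lhs x t = - sin (x t)) /\
      (forall t : R, Derive x t <> 1 -> energy x t = c) /\
      (periodic x <-> b < 1 / 2) /\
      (b < 1 / 2 ->
         surrounds_origin (phase_orbit x) /\ symmetric_wrt_vaxis (phase_orbit x)) /\
      (1 / 2 < b ->
         (exists tj : Z -> R, root_enumeration A B b tj) /\
         forall tj : Z -> R, root_enumeration A B b tj ->
           (forall j : Z,
              (exists k : Z, x (tj j) = (2 * IZR k + 1) * (PI / 2)) /\
              Derive x (tj j) = 1) /\
           (forall j : Z,
              is_lim (ode_lhs x) (tj j) (- sin (x (tj j))) /\
              is_lim (energy x) (tj j) c) /\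
           (forall t : R,
              sqrt (1 + c) / (sqrt (1 + c) + 1) <= Derive x t <=
              sqrt (1 + c) / (sqrt (1 + c) - 1)) /\
           (forall t : R, Derive x t = 1 <-> exists j : Z, t = tj j) /\
           (forall (j : Z) (s s' : R),
              tj (j - 1)%Z < s < tj j -> tj j < s' < tj (j + 1)%Z ->
              (Derive x s - 1) * (Derive x s' - 1) < 0)).
Proof.
  intros a b Ha Hb1 Hb2 Hab c A B.
  apply Rabs_lt_between in Ha.
  assert (Hca : 0 < cos a) by (apply cos_gt_0; lra).
  assert (Hc2 : 0 < cos a ^ 2) by (apply pow_lt; lra).
  set (k := 2 * (1 - b)); set (K := 2 * (2 * b - 1) * cos a ^ 2).
  assert (rel : A ^ 2 + B ^ 2 = k ^ 2 + 2 * K) by apply initial_relation.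
  assert (Hk : k <> 0) by (unfold k; lra).
  assert (HK0 : K <> 0) by (unfold K; nra).
  pose proof (initial_defect a b) as H0; fold A B k K in H0.
  replace c with (2 * K / k ^ 2) by (unfold c, K, k; field; lra).
  exists (sol A B k K a).
  split; [|split; [|split; [|split; [|split; [|split; [|split; [|split; [|split]]]]]]]].
  - apply smooth_sol; auto.
  - apply sol0.
  - rewrite Derive_sol by auto; apply initial_velocity; auto.
  - intros t; replace (k + B * cos t - A * sin t) with (k + rot_u A B t) by (unfold rot_u; ring).
    apply tan_sol; auto.
  - intro t; rewrite Derive_sol, velocity_expand by auto; unfold k, rot_u; do 2 f_equal; ring.
  - intros t _ Hv; apply ode_sol; auto.
  - intros t Hv; apply energy_sol; auto.
  - split; [intro Hper | intro Hb; apply periodic_sol; auto; unfold k, K; nra].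
    destruct (Rlt_le_dec b (1 / 2)) as [|Hb]; auto; exfalso.
    apply (sol_not_periodic A B k K rel HK0 a); auto; unfold K; nra.
  - intro Hb; assert (0 < k) by (unfold k; lra); assert (K < 0) by (unfold K; nra).
    assert (0 < A ^ 2 + B ^ 2) by (apply initial_AB_pos; auto).
    split; [apply sol_orbit_surrounds_origin | apply sol_orbit_symmetric]; auto.
  - intro Hb; assert (HK : 0 < K) by (unfold K; nra).
    assert (Hkdef : k = 2 * (1 - b)) by reflexivity.
    split; [apply exists_root_enumeration; rewrite rel; unfold k; nra|].
    intros tj Henum; split; [|split; [|split; [|split]]].
    + intro j; eapply sol_at_root; eauto.
    + intro j; split; [eapply ode_lim_at_root | eapply energy_lim_at_root]; eauto.
    + intro t; rewrite Derive_sol by auto; apply velocity_strip; auto.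
    + intro t; eapply Derive_sol_eq1_roots; eauto.
    + intros j s s'; eapply Derive_sol_crosses_one; eauto.
Qed.
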